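(* Let $r\in(0,1)$ and let $(\eta(t))_{t\in\mathbb{Z}_+}$ be the nonlinear process with $\mathbb{E}(\eta(0))=r$. Then on a common probability space one can construct this nonlinear process together with an M/D/1 queue $(\zeta(t))_{t\in\mathbb{Z}_+}$ with arrival rate $r$ and $\zeta(0)=\eta(0)$ such that $\eta(t)\le\zeta(t)$ almost surely for every $t\ge 0$. Consequently, if moreover $\mathbb{E}(e^{\lambda_0\eta(0)})<\infty$ for some $\lambda_0>0$, then there is $\lambda>0$ with $\sup_{t\ge0}\mathbb{E}(e^{\lambda\eta(t)})<\infty$.
   Context: The nonlinear process $(\eta(t))_{t\in\mathbb{Z}_+}$ takes values in $\mathbb{Z}_+$: $\eta(0)$ has a given distribution; given $\eta(t)$, set $\rho(t):=\mathbb{P}(\eta(t)>0)$, let $N_{t+1}$ be Poisson with mean $\rho(t)$ (mean $0$ meaning identically $0$), independent of everything before, and set $\eta(t+1):=\eta(t)-\mathbf{1}(\eta(t)>0)+N_{t+1}$. The M/D/1 queue with arrival rate $\rho\ge 0$ is the Markov chain $(\zeta(t))_{t\in\mathbb{Z}_+}$ on $\mathbb{Z}_+$ given by $\zeta(t+1):=\zeta(t)-\mathbf{1}(\zeta(t)>0)+M_{t+1}$, where $(M_t)_{t\ge1}$ are i.i.d. Poisson random variables with mean $\rho$, independent of $\zeta(0)$. *)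

From Stdlib Require Import Reals List Arith.
Import ListNotations.
Open Scope R_scope.

(* Poisson pmf with mean m (m = 0 gives the point mass at 0, since 0^0 = 1). *)
Definition pois (m : R) (k : nat) : R := exp (- m) * m ^ k / INR (fact k).

(* One-step transition kernel of  x |-> x - 1(x>0) + N,  N ~ Poisson(rho). *)
Definition K (rho : R) (x y : nat) : R :=
  if Nat.leb (Nat.pred x) y then pois rho (y - Nat.pred x) else 0.

(* Laws mu t of eta(t) for the nonlinear process with initial law mu0;
   rho(t) = P(eta(t) > 0) = 1 - mu t 0. *)
Fixpoint mu (mu0 : nat -> R) (t : nat) : nat -> R :=
  match t with
  | O => mu0
  | S t' => let m := mu mu0 t' in
            fun n => sum_f_R0 (fun k => m k * K (1 - m 0%nat) k n) (S n)
  end.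

Definition rho_nl (mu0 : nat -> R) (t : nat) : R := 1 - mu mu0 t 0%nat.

(* Finite-dimensional distributions of a (time-inhomogeneous) chain with
   initial law init and Poisson rate rates t at step t -> t+1.
   A list [x0; ...; xT] is a trajectory up to time T. *)
Fixpoint chain (rates : nat -> R) (t x : nat) (rest : list nat) : R :=
  match rest with
  | [] => 1
  | y :: r => K (rates t) x y * chain rates (S t) y r
  end.

Definition fdd (init : nat -> R) (rates : nat -> R) (xs : list nat) : R :=
  match xs with
  | [] => 1
  | x :: r => init x * chain rates 0%nat x r
  end.

Definition fdd_eta (mu0 : nat -> R) := fdd mu0 (rho_nl mu0).
Definition fdd_MD1 (r : R) (mu0 : nat -> R) := fdd mu0 (fun _ => r).

(* lsum_is n f s : the (iterated, nonnegative) sum of f over all lists of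
   naturals of length n equals s. *)
Inductive lsum_is : nat -> (list nat -> R) -> R -> Prop :=
| lsum_O : forall f, lsum_is 0%nat f (f [])
| lsum_S : forall n f (g : nat -> R) s,
    (forall a, lsum_is n (fun l => f (a :: l)) (g a)) ->
    infinite_sum g s -> lsum_is (S n) f s.

(* P is the law of a coupled process (eta(t), zeta(t))_t, given through its
   projective (Kolmogorov-consistent) family of finite-dimensional
   distributions: P [(x0,y0);...;(xT,yT)] = Prob(eta(s)=xs, zeta(s)=ys, s<=T). *)
Definition is_process_law (P : list (nat * nat) -> R) : Prop :=
  (forall l, 0 <= P l) /\ P [] = 1 /\
  (forall l, exists g : nat -> R,
      (forall a, infinite_sum (fun b => P (l ++ [(a, b)])) (g a)) /\
      infinite_sum g (P l)).

Definition marg1 (P : list (nat * nat) -> R) (F : list nat -> R) : Prop :=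
  forall xs, lsum_is (length xs) (fun ys => P (combine xs ys)) (F xs).
Definition marg2 (P : list (nat * nat) -> R) (F : list nat -> R) : Prop :=
  forall ys, lsum_is (length ys) (fun xs => P (combine xs ys)) (F ys).

Definition dominated (P : list (nat * nat) -> R) : Prop :=
  forall l, P l <> 0 ->
    Forall (fun p => (fst p <= snd p)%nat) l /\
    match l with (a, b) :: _ => a = b | [] => True end.

(* The laws of the nonlinear process obey mu (t+1) = law (pred eta t) * Poisson (rho t).
   Since P (eta > 0) <= E eta, the mean stays equal to r along the evolution, hence
   rho t <= r for all t.  Coupling: eta receives Poisson (rho t) arrivals and zeta
   receives the same arrivals plus independent Poisson (r - rho t) ones, so zeta is an
   M/D/1 queue of rate r and every step preserves eta <= zeta.  Exponential moments:
   one step maps M = E exp (l eta t) to at most (1 + exp (-l) M) exp (r (e^l - 1)),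
   an affine contraction for small l > 0 because r < 1. *)

From Stdlib Require Import Reals List Arith Lia Lra FunctionalExtensionality.
From Coquelicot Require Import Coquelicot.
Import ListNotations.
Open Scope R_scope.

(** * Real series and discrete convolution *)

Lemma is_seriesR_ext (a b : nat -> R) (l : R) :
  (forall n, a n = b n) -> is_series a l -> is_series b l.
Proof. exact (is_series_ext (V := R_NormedModule) a b l). Qed.

Lemma is_seriesR_scal_l (c : R) (a : nat -> R) (l : R) :
  is_series a l -> is_series (fun n => c * a n) (c * l).
Proof. exact (is_series_scal_l c a l). Qed.

Lemma is_seriesR_scal_r (c : R) (a : nat -> R) (l : R) :
  is_series a l -> is_series (fun n => a n * c) (l * c).
Proof. exact (is_series_scal_r c a l). Qed.

Lemma is_seriesR_plus (a b : nat -> R) (la lb : R) :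
  is_series a la -> is_series b lb -> is_series (fun n => a n + b n) (la + lb).
Proof. exact (is_series_plus a b la lb). Qed.

Lemma is_seriesR_minus (a b : nat -> R) (la lb : R) :
  is_series a la -> is_series b lb -> is_series (fun n => a n - b n) (la - lb).
Proof. exact (is_series_minus a b la lb). Qed.

Lemma is_seriesR_incr_1 (a : nat -> R) (l : R) :
  is_series a l -> is_series (fun k => a (S k)) (l - a 0%nat).
Proof.
  intro H. apply is_series_incr_1.
  replace (plus _ _) with l; [exact H | unfold plus; simpl; ring].
Qed.

Lemma is_seriesR_decr_1 (a : nat -> R) (l : R) :
  is_series (fun k => a (S k)) l -> is_series a (a 0%nat + l).
Proof.
  intro H. apply is_series_decr_1.
  replace (plus _ _) with l; [exact H | unfold plus, opp; simpl; ring].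
Qed.

Lemma is_seriesR_finite (f : nat -> R) (M : nat) :
  (forall n, (M < n)%nat -> f n = 0) -> is_series f (sum_f_R0 f M).
Proof.
  intro Hf. apply is_series_Reals. intros eps Heps. exists M. intros n Hn.
  replace (sum_f_R0 f n) with (sum_f_R0 f M).
  - unfold R_dist. rewrite Rminus_eq_0, Rabs_R0. exact Heps.
  - replace n with (M + (n - M))%nat by lia. induction (n - M)%nat as [|k IH].
    + now rewrite Nat.add_0_r.
    + rewrite Nat.add_succ_r. simpl. rewrite <- IH, Hf by lia. ring.
Qed.

Definition shift (c : nat) (f : nat -> R) (n : nat) : R :=
  if Nat.leb c n then f (n - c)%nat else 0.

Lemma is_series_shift (c : nat) (f : nat -> R) (s : R) :
  is_series f s -> is_series (shift c f) s.
Proof.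
  revert f s. induction c as [|c IH]; intros f s H.
  - apply (is_seriesR_ext f); [|exact H]. intro n. unfold shift. simpl. now rewrite Nat.sub_0_r.
  - replace s with (shift (S c) f 0 + s) by (unfold shift; simpl; ring).
    apply is_seriesR_decr_1. exact (IH f s H).
Qed.

Lemma is_series_point (a : nat) (c : R) :
  is_series (fun b => if Nat.eqb a b then c else 0) c.
Proof.
  set (delta := fun k : nat => match k with O => c | S _ => 0 end).
  apply (is_seriesR_ext (shift a delta)).
  - intro b. unfold shift, delta. destruct (Nat.eqb_spec a b), (Nat.leb_spec a b); try lia.
    + subst. now rewrite Nat.sub_diag.
    + now destruct (b - a)%nat eqn:E; [lia|].
    + reflexivity.
  - apply is_series_shift. apply (is_seriesR_finite delta 0). now intros [|n].
Qed.

Section NonnegSeries.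
Variables (f : nat -> R) (s : R).
Hypotheses (Hf : is_series f s) (Hpos : forall n, 0 <= f n).

Lemma is_series_partial_le (N : nat) : sum_f_R0 f N <= s.
Proof. apply sum_incr; [now apply is_series_Reals | exact Hpos]. Qed.

Lemma is_series_term_le (N : nat) : f N <= s.
Proof.
  eapply Rle_trans; [|apply (is_series_partial_le N)].
  destruct N; simpl; [lra|]. pose proof (cond_pos_sum f N Hpos). lra.
Qed.

Lemma is_series_ge0 : 0 <= s.
Proof. eapply Rle_trans; [apply (Hpos 0%nat) | apply is_series_term_le]. Qed.

Lemma ex_series_Rabs_of_nonneg : ex_series (fun n => Rabs (f n)).
Proof. exists s. apply (is_seriesR_ext f); [|exact Hf]. intro n. now rewrite Rabs_pos_eq. Qed.

End NonnegSeries.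

Definition conv (a b : nat -> R) (n : nat) : R :=
  sum_f_R0 (fun k => a k * b (n - k)%nat) n.

Lemma conv_ge0 (a b : nat -> R) (n : nat) :
  (forall k, 0 <= a k) -> (forall k, 0 <= b k) -> 0 <= conv a b n.
Proof. intros Ha Hb. apply cond_pos_sum. intro k. now apply Rmult_le_pos. Qed.

Lemma is_series_conv (a b : nat -> R) (la lb : R) :
  (forall k, 0 <= a k) -> (forall k, 0 <= b k) ->
  is_series a la -> is_series b lb -> is_series (conv a b) (la * lb).
Proof.
  intros Ha Hb Hsa Hsb.
  exact (is_series_mult a b la lb Hsa Hsb
           (ex_series_Rabs_of_nonneg a la Hsa Ha) (ex_series_Rabs_of_nonneg b lb Hsb Hb)).
Qed.

Lemma conv_mul_exp (a b : nat -> R) (l : R) (n : nat) :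
  conv (fun k => a k * exp (l * INR k)) (fun k => b k * exp (l * INR k)) n
  = conv a b n * exp (l * INR n).
Proof.
  unfold conv. rewrite Rmult_comm, scal_sum. apply sum_eq. intros k Hk.
  replace (INR n) with (INR k + INR (n - k)) by (rewrite <- plus_INR; f_equal; lia).
  rewrite Rmult_plus_distr_l, exp_plus. ring.
Qed.

Lemma INR_mul_conv (a b : nat -> R) (n : nat) :
  INR n * conv a b n
  = conv (fun k => INR k * a k) b n + conv a (fun k => INR k * b k) n.
Proof.
  unfold conv. rewrite <- plus_sum, scal_sum. apply sum_eq. intros k Hk.
  rewrite minus_INR by lia. ring.
Qed.

Lemma is_series_conv_mgf (a b : nat -> R) (l sa sb : R) :
  (forall k, 0 <= a k) -> (forall k, 0 <= b k) ->
  is_series (fun k => a k * exp (l * INR k)) sa ->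
  is_series (fun k => b k * exp (l * INR k)) sb ->
  is_series (fun n => conv a b n * exp (l * INR n)) (sa * sb).
Proof.
  intros Ha Hb Hsa Hsb.
  assert (Hpos : forall (f : nat -> R) k, (forall k, 0 <= f k) -> 0 <= f k * exp (l * INR k))
    by (intros f k Hf; apply Rmult_le_pos; [apply Hf | left; apply exp_pos]).
  apply (is_seriesR_ext _ _ _ (conv_mul_exp a b l)).
  apply is_series_conv; auto.
Qed.

(** * Laws on the naturals and the nonlinear dynamics *)

Definition law_with_mean (m : nat -> R) (e : R) : Prop :=
  (forall n, 0 <= m n) /\ is_series m 1 /\ is_series (fun n => INR n * m n) e.

Lemma conv_law_with_mean (a b : nat -> R) (ea eb : R) :
  law_with_mean a ea -> law_with_mean b eb -> law_with_mean (conv a b) (ea + eb).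
Proof.
  intros [Ha [Hsa Hma]] [Hb [Hsb Hmb]].
  assert (Hna : forall k, 0 <= INR k * a k) by (intro; apply Rmult_le_pos; [apply pos_INR | auto]).
  assert (Hnb : forall k, 0 <= INR k * b k) by (intro; apply Rmult_le_pos; [apply pos_INR | auto]).
  split; [|split].
  - intro n. now apply conv_ge0.
  - replace 1 with (1 * 1) by ring. now apply is_series_conv.
  - apply (is_seriesR_ext _ _ _ (fun n => eq_sym (INR_mul_conv a b n))).
    replace (ea + eb) with (ea * 1 + 1 * eb) by ring.
    apply is_seriesR_plus; now apply is_series_conv.
Qed.

(* [e - (1 - m 0)] is the sum of the nonnegative terms [(n - 1) m n], [n >= 1]. *)
Lemma law_with_mean_pos_mass (m : nat -> R) (e : R) :
  law_with_mean m e -> 0 <= 1 - m 0%nat <= e.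
Proof.
  intros [Hp [Hs Hm]]. split.
  - pose proof (is_series_term_le m 1 Hs Hp 0). lra.
  - set (d := fun n => INR n * m n - m n + match n with O => m 0%nat | S _ => 0 end).
    assert (Hd : is_series d (e - 1 + m 0%nat)).
    { apply is_seriesR_plus; [now apply is_seriesR_minus|].
      apply (is_seriesR_finite (fun n => match n with O => m 0%nat | S _ => 0 end) 0).
      now intros [|n]. }
    enough (0 <= e - 1 + m 0%nat) by lra.
    apply (is_series_ge0 d _ Hd). intros [|n]; unfold d.
    + simpl. lra.
    + rewrite S_INR. pose proof (pos_INR n). specialize (Hp (S n)). nra.
Qed.

Definition law_pred (m : nat -> R) (j : nat) : R :=
  match j with O => m 0%nat + m 1%nat | S j' => m (S (S j')) end.

Lemma law_pred_law_with_mean (m : nat -> R) (e : R) :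
  law_with_mean m e -> law_with_mean (law_pred m) (e - (1 - m 0%nat)).
Proof.
  intros [Hp [Hs Hm]]. split; [|split].
  - intros [|j]; simpl; [pose proof (Hp 0%nat); pose proof (Hp 1%nat); lra | apply Hp].
  - apply (is_seriesR_ext (fun k => m (S k) + match k with O => m 0%nat | S _ => 0 end)).
    + intros [|k]; simpl; ring.
    + replace 1 with (1 - m 0%nat + m 0%nat) by ring.
      apply is_seriesR_plus; [now apply is_seriesR_incr_1|].
      apply (is_seriesR_finite (fun k => match k with O => m 0%nat | S _ => 0 end) 0).
      now intros [|k].
  - apply (is_seriesR_ext (fun k => INR (S k) * m (S k) - m (S k))).
    + intros [|k]; [simpl; ring | unfold law_pred; rewrite (S_INR (S k)); ring].
    + replace (e - (1 - m 0%nat)) with ((e - INR 0 * m 0%nat) - (1 - m 0%nat)) by (simpl; ring).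
      apply is_seriesR_minus; [exact (is_seriesR_incr_1 _ _ Hm) | now apply is_seriesR_incr_1].
Qed.

Lemma is_series_law_pred_mgf (m : nat -> R) (l s : R) :
  is_series (fun n => m n * exp (l * INR n)) s ->
  is_series (fun k => law_pred m k * exp (l * INR k)) (exp (- l) * (s - m 0%nat) + m 0%nat).
Proof.
  intro H.
  apply (is_seriesR_ext (fun k => exp (- l) * (m (S k) * exp (l * INR (S k)))
                                  + match k with O => m 0%nat | S _ => 0 end)).
  - intro k. rewrite S_INR, Rmult_plus_distr_l, Rmult_1_r, exp_plus.
    replace (exp (- l) * (m (S k) * (exp (l * INR k) * exp l)))
      with (m (S k) * exp (l * INR k) * (exp (- l) * exp l)) by ring.
    rewrite <- exp_plus, Rplus_opp_l, exp_0.
    destruct k; simpl INR; [rewrite Rmult_0_r, exp_0; simpl; ring | simpl; ring].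
  - apply is_seriesR_plus.
    + apply is_seriesR_scal_l.
      replace (s - m 0%nat) with (s - m 0%nat * exp (l * INR 0)) by (simpl; rewrite Rmult_0_r, exp_0; ring).
      exact (is_seriesR_incr_1 _ _ H).
    + apply (is_seriesR_finite (fun k => match k with O => m 0%nat | S _ => 0 end) 0).
      now intros [|k].
Qed.



Lemma exp_mul_INR (l : R) (k : nat) : exp (l * INR k) = exp l ^ k.
Proof.
  induction k as [|k IH]; [simpl; now rewrite Rmult_0_r, exp_0|].
  rewrite S_INR, Rmult_plus_distr_l, Rmult_1_r, exp_plus, IH. simpl. ring.
Qed.

Lemma is_series_exp (x : R) : is_series (fun k => x ^ k / INR (fact k)) (exp x).
Proof.
  apply is_series_Reals. unfold exp. destruct (exist_exp x) as [l Hl]. simpl.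
  intros eps Heps. destruct (Hl eps Heps) as [N HN]. exists N. intros n Hn.
  replace (sum_f_R0 (fun k => x ^ k / INR (fact k)) n)
    with (sum_f_R0 (fun k => / INR (fact k) * x ^ k) n); [now apply HN|].
  apply sum_eq. intros; unfold Rdiv; ring.
Qed.

Lemma pois_ge0 (m : R) (k : nat) : 0 <= m -> 0 <= pois m k.
Proof.
  intro Hm. unfold pois. apply Rmult_le_pos; [apply Rmult_le_pos|].
  - left; apply exp_pos.
  - now apply pow_le.
  - left. apply Rinv_0_lt_compat, INR_fact_lt_0.
Qed.

Lemma is_series_pois_mgf (m l : R) :
  is_series (fun k => pois m k * exp (l * INR k)) (exp (m * (exp l - 1))).
Proof.
  apply (is_seriesR_ext (fun k => exp (- m) * ((m * exp l) ^ k / INR (fact k)))).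
  - intro k. unfold pois, Rdiv. rewrite exp_mul_INR, Rpow_mult_distr. ring.
  - replace (m * (exp l - 1)) with (- m + m * exp l) by ring. rewrite exp_plus.
    apply is_seriesR_scal_l, is_series_exp.
Qed.

Lemma is_series_pois (m : R) : is_series (pois m) 1.
Proof.
  apply (is_seriesR_ext (fun k => exp (- m) * (m ^ k / INR (fact k)))).
  - intro k. unfold pois, Rdiv. ring.
  - replace 1 with (exp (- m) * exp m) by (rewrite <- exp_plus, Rplus_opp_l; apply exp_0).
    apply is_seriesR_scal_l, is_series_exp.
Qed.

Lemma pois_law_with_mean (m : R) : 0 <= m -> law_with_mean (pois m) m.
Proof.
  intro Hm. split; [|split].
  - intro k. now apply pois_ge0.
  - apply is_series_pois.
  - assert (Htail : is_series (fun k => INR (S k) * pois m (S k)) (m * 1)).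
    { apply (is_seriesR_ext (fun k => m * pois m k)); [|apply is_seriesR_scal_l, is_series_pois].
      intro k. unfold pois. change (fact (S k)) with (S k * fact k)%nat.
      rewrite mult_INR, <- tech_pow_Rmult. field.
      split; [apply INR_fact_neq_0 | apply not_0_INR; lia]. }
    pose proof (is_seriesR_decr_1 (fun k => INR k * pois m k) _ Htail) as H.
    cbv beta in H. replace (INR 0 * pois m 0 + m * 1) with m in H by (simpl; ring). exact H.
Qed.

Lemma pois_conv (a b : R) (n : nat) : conv (pois a) (pois b) n = pois (a + b) n.
Proof.
  transitivity (sum_f_R0 (fun i => Binomial.C n i * a ^ i * b ^ (n - i)) n
                * (exp (- (a + b)) / INR (fact n))).
  - unfold conv. rewrite Rmult_comm, scal_sum. apply sum_eq. intros i Hi. unfold pois, Binomial.C.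
    replace (exp (- (a + b))) with (exp (- a) * exp (- b)) by (rewrite <- exp_plus; f_equal; ring).
    field. repeat split; apply INR_fact_neq_0.
  - rewrite <- binomial. unfold pois, Rdiv. ring.
Qed.

Lemma K_ge0 (a : R) (x y : nat) : 0 <= a -> 0 <= K a x y.
Proof. intro Ha. unfold K. destruct (Nat.leb _ _); [now apply pois_ge0 | lra]. Qed.

Lemma is_series_K (a : R) (x : nat) : is_series (K a x) 1.
Proof. exact (is_series_shift (pred x) (pois a) 1 (is_series_pois a)). Qed.

Lemma mu_succ (mu0 : nat -> R) (t : nat) :
  mu mu0 (S t) = conv (law_pred (mu mu0 t)) (pois (rho_nl mu0 t)).
Proof.
  extensionality n. set (m := mu mu0 t). set (b := pois (rho_nl mu0 t)).
  change (mu mu0 (S t) n) with (sum_f_R0 (fun k => m k * K (rho_nl mu0 t) k n) (S n)).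
  assert (Hdelta : forall c N, sum_f_R0 (fun k => match k with O => c | S _ => 0 end) N = c)
    by (intros c N; induction N as [|N IH]; simpl; [|rewrite IH]; ring).
  rewrite decomp_sum by lia. simpl pred. unfold conv.
  transitivity (sum_f_R0 (fun k => m (S k) * b (n - k)%nat + match k with O => m 0%nat * b n | S _ => 0 end) n).
  - rewrite plus_sum, Hdelta, Rplus_comm. f_equal.
    + apply sum_eq. intros i Hi. unfold K. simpl pred.
      destruct (Nat.leb_spec i n); [reflexivity | lia].
    + unfold K, b. simpl. now rewrite Nat.sub_0_r.
  - apply sum_eq. intros [|i] Hi; simpl; [rewrite Nat.sub_0_r|]; ring.
Qed.

Lemma mu_law_with_mean (mu0 : nat -> R) (r : R) (t : nat) :
  law_with_mean mu0 r -> law_with_mean (mu mu0 t) r.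
Proof.
  intro H0. induction t as [|t IH]; [exact H0|].
  pose proof (law_with_mean_pos_mass _ _ IH) as Hrho.
  rewrite mu_succ. replace r with (r - rho_nl mu0 t + rho_nl mu0 t) by ring.
  apply conv_law_with_mean.
  - now apply law_pred_law_with_mean.
  - apply pois_law_with_mean. unfold rho_nl. lra.
Qed.

Lemma rho_nl_bounds (mu0 : nat -> R) (r : R) (t : nat) :
  law_with_mean mu0 r -> 0 <= rho_nl mu0 t <= r.
Proof. intro H. exact (law_with_mean_pos_mass _ _ (mu_law_with_mean mu0 r t H)). Qed.

Lemma is_series_mu_mgf_succ (mu0 : nat -> R) (r : R) (t : nat) (l s : R) :
  law_with_mean mu0 r ->
  is_series (fun n => mu mu0 t n * exp (l * INR n)) s ->
  is_series (fun n => mu mu0 (S t) n * exp (l * INR n))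
    ((exp (- l) * (s - mu mu0 t 0%nat) + mu mu0 t 0%nat) * exp (rho_nl mu0 t * (exp l - 1))).
Proof.
  intros H0 Hs. rewrite mu_succ.
  destruct (law_pred_law_with_mean _ _ (mu_law_with_mean mu0 r t H0)) as [Hpred _].
  apply is_series_conv_mgf; auto using is_series_law_pred_mgf, is_series_pois_mgf.
  intro k. apply pois_ge0, (rho_nl_bounds mu0 r t H0).
Qed.

(** * Exponential moments *)

Lemma exp_le_exp (x y : R) : x <= y -> exp x <= exp y.
Proof. intros [H | ->]; [left; now apply exp_increasing | right; reflexivity]. Qed.

Lemma mgf_step_le (l rho r s m0 : R) :
  0 < l -> 0 <= m0 <= 1 -> 0 <= rho <= r -> 0 <= s ->
  (exp (- l) * (s - m0) + m0) * exp (rho * (exp l - 1))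
  <= exp (r * (exp l - 1)) + exp (- l) * exp (r * (exp l - 1)) * s.
Proof.
  intros Hl Hm Hrho Hs.
  assert (Hel : exp (- l) < 1) by (rewrite <- exp_0; apply exp_increasing; lra).
  assert (He0 : 0 < exp (- l)) by apply exp_pos.
  assert (Hgt1 : 1 < exp l) by (rewrite <- exp_0; apply exp_increasing; lra).
  assert (Hmono : exp (rho * (exp l - 1)) <= exp (r * (exp l - 1))).
  { apply exp_le_exp. nra. }
  pose proof (exp_pos (rho * (exp l - 1))).
  set (A := exp (- l) * (s - m0) + m0).
  assert (HA : 0 <= A <= 1 + exp (- l) * s) by (unfold A; split; nra).
  replace (exp (r * (exp l - 1)) + exp (- l) * exp (r * (exp l - 1)) * s)
    with ((1 + exp (- l) * s) * exp (r * (exp l - 1))) by ring.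
  apply Rle_trans with (A * exp (r * (exp l - 1))); apply Rmult_le_compat; lra.
Qed.

(* For small [l], [e^l - 1 <= l e^l] and [r e^l < 1] give [r (e^l - 1) < l]. *)
Lemma exists_mgf_contraction (r l0 : R) :
  0 < r < 1 -> 0 < l0 ->
  exists l, 0 < l <= l0 /\ exp (- l) * exp (r * (exp l - 1)) < 1.
Proof.
  intros Hr Hl0.
  assert (Hln : ln r < ln 1) by (apply ln_increasing; lra). rewrite ln_1 in Hln.
  set (l := Rmin l0 (- ln r) / 2).
  assert (Hmin : 0 < Rmin l0 (- ln r)) by (apply Rmin_glb_lt; lra).
  pose proof (Rmin_l l0 (- ln r)) as Hmin_l. pose proof (Rmin_r l0 (- ln r)) as Hmin_r.
  exists l. split; [unfold l; lra|].
  assert (Hre : r * exp l < 1).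
  { assert (H : exp l < exp (- ln r)) by (apply exp_increasing; unfold l; lra).
    rewrite exp_Ropp, exp_ln in H by lra.
    apply (Rmult_lt_compat_l r) in H; [|lra]. rewrite Rinv_r in H by lra. exact H. }
  assert (Hconvex : exp l - 1 <= l * exp l).
  { pose proof (exp_ineq1_le (- l)) as H. rewrite exp_Ropp in H.
    pose proof (exp_pos l). apply (Rmult_le_compat_r (exp l)) in H; [|lra].
    rewrite Rinv_l in H by lra. nra. }
  assert (Hl : 0 < l) by (unfold l; lra).
  assert (Hdrift : r * (exp l - 1) <= r * (l * exp l)) by (apply Rmult_le_compat_l; lra).
  assert (Hsmall : l * (r * exp l) < l * 1) by (apply Rmult_lt_compat_l; lra).
  assert (Hneg : - l + r * (exp l - 1) < 0) by lra.
  apply exp_increasing in Hneg. now rewrite exp_0, exp_plus in Hneg.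
Qed.

Lemma affine_step_le_max (D c s s0 : R) :
  0 <= c < 1 -> s <= Rmax s0 (D / (1 - c)) -> D + c * s <= Rmax s0 (D / (1 - c)).
Proof.
  intros Hc Hs. set (B := Rmax s0 (D / (1 - c))) in *.
  assert (HD : D <= (1 - c) * B).
  { pose proof (Rmax_r s0 (D / (1 - c))) as H. fold B in H.
    apply (Rmult_le_compat_l (1 - c)) in H; [|lra].
    replace ((1 - c) * (D / (1 - c))) with D in H by (field; lra). exact H. }
  nra.
Qed.

Lemma ex_series_mgf_le (m : nat -> R) (l l0 s0 : R) :
  (forall n, 0 <= m n) -> 0 <= l <= l0 ->
  is_series (fun n => m n * exp (l0 * INR n)) s0 ->
  exists s, is_series (fun n => m n * exp (l * INR n)) s.
Proof.
  intros Hm Hl Hs0.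
  apply (@ex_series_le R_AbsRing R_CompleteNormedModule _ (fun n => m n * exp (l0 * INR n))).
  - intro n. change (norm (m n * exp (l * INR n))) with (Rabs (m n * exp (l * INR n))).
    rewrite Rabs_pos_eq by (apply Rmult_le_pos; [apply Hm | left; apply exp_pos]).
    apply Rmult_le_compat_l; [apply Hm|]. apply exp_le_exp.
    apply Rmult_le_compat_r; [apply pos_INR | lra].
  - now exists s0.
Qed.

Lemma mu_mgf_bounded (mu0 : nat -> R) (r l0 s0 : R) :
  0 < r < 1 -> law_with_mean mu0 r -> 0 < l0 ->
  is_series (fun n => mu0 n * exp (l0 * INR n)) s0 ->
  exists l, 0 < l /\ exists M, forall t,
    exists s, is_series (fun n => mu mu0 t n * exp (l * INR n)) s /\ s <= M.
Proof.
  intros Hr H0 Hl0 Hs0.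
  destruct (exists_mgf_contraction r l0 Hr Hl0) as [l [Hl Hc]].
  set (D := exp (r * (exp l - 1))) in *. set (c := exp (- l) * D) in *.
  assert (Hc0 : 0 <= c) by (left; apply Rmult_lt_0_compat; apply exp_pos).
  pose proof (proj1 H0) as Hpos0.
  destruct (ex_series_mgf_le mu0 l l0 s0 Hpos0 ltac:(lra) Hs0) as [s1 Hs1].
  exists l. split; [lra|]. exists (Rmax s1 (D / (1 - c))).
  intro t. induction t as [|t [s [Hs Hle]]].
  - exists s1. split; [exact Hs1 | apply Rmax_l].
  - destruct (mu_law_with_mean mu0 r t H0) as [Hpos [Hsum _]].
    pose proof (is_series_term_le _ _ Hsum Hpos 0) as Hm0.
    eexists. split; [exact (is_series_mu_mgf_succ mu0 r t l s H0 Hs)|].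
    apply Rle_trans with (D + c * s); [|apply affine_step_le_max; [lra | exact Hle]].
    apply mgf_step_le; [lra | split; [apply Hpos | lra] | exact (rho_nl_bounds mu0 r t H0) |].
    apply (is_series_ge0 _ _ Hs). intro n. apply Rmult_le_pos; [apply Hpos | left; apply exp_pos].
Qed.

(** * Markovian couplings of two chains *)

Fixpoint path_weight {A : Type} (k : nat -> A -> A -> R) (t : nat) (x : A) (rest : list A) : R :=
  match rest with
  | [] => 1
  | y :: rest' => k t x y * path_weight k (S t) y rest'
  end.

Definition path_law {A : Type} (init : A -> R) (k : nat -> A -> A -> R) (l : list A) : R :=
  match l with
  | [] => 1
  | x :: rest => init x * path_weight k 0 x rest
  end.

Lemma fdd_path_law (init rates : nat -> R) :
  fdd init rates = path_law init (fun t => K (rates t)).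
Proof.
  extensionality xs. destruct xs as [|x rest]; [reflexivity|]. simpl. f_equal.
  generalize 0%nat. revert x. induction rest as [|y rest IH]; intros x t; simpl; [|rewrite IH]; reflexivity.
Qed.

Lemma path_law_ge0 {A : Type} (init : A -> R) (k : nat -> A -> A -> R) (l : list A) :
  (forall x, 0 <= init x) -> (forall t x y, 0 <= k t x y) -> 0 <= path_law init k l.
Proof.
  intros Hinit Hk. destruct l as [|x rest]; simpl; [lra|].
  apply Rmult_le_pos; [apply Hinit|]. generalize 0%nat. revert x.
  induction rest as [|y rest IH]; intros x t; simpl; [lra|]. now apply Rmult_le_pos.
Qed.

Lemma last_cons {A : Type} (a : A) (l : list A) (d : A) : last (a :: l) d = last l a.
Proof.
  revert a d. induction l as [|b l IH]; intros a d; [reflexivity|].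
  change (last (b :: l) d = last (b :: l) a). now rewrite !IH.
Qed.

Lemma path_weight_snoc {A : Type} (k : nat -> A -> A -> R) (l : list A) (t : nat) (x y : A) :
  path_weight k t x (l ++ [y]) = path_weight k t x l * k (t + length l)%nat (last l x) y.
Proof.
  revert t x. induction l as [|a l IH]; intros t x; [simpl; rewrite Nat.add_0_r; ring|].
  simpl app. simpl path_weight. simpl length. rewrite IH, last_cons, Nat.add_succ_r. simpl. ring.
Qed.

Lemma path_law_snoc {A : Type} (init : A -> R) (k : nat -> A -> A -> R) (x : A) (l : list A) (y : A) :
  path_law init k ((x :: l) ++ [y]) = path_law init k (x :: l) * k (length l) (last l x) y.
Proof. simpl. rewrite path_weight_snoc, Nat.add_0_l. ring. Qed.

Lemma path_law_map {A B : Type} (f : A -> B) (init : B -> R) (k : nat -> B -> B -> R) (l : list A) :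
  path_law init k (map f l) = path_law (fun x => init (f x)) (fun t x y => k t (f x) (f y)) l.
Proof.
  destruct l as [|x rest]; [reflexivity|]. simpl. f_equal.
  generalize 0%nat. revert x. induction rest as [|y rest IH]; intros x t; simpl; [|rewrite IH]; reflexivity.
Qed.

Lemma combine_snoc {A B : Type} (xs : list A) (ys : list B) (a : A) (b : B) :
  length xs = length ys -> combine (xs ++ [a]) (ys ++ [b]) = combine xs ys ++ [(a, b)].
Proof.
  revert ys. induction xs as [|x xs IH]; intros [|y ys] H; simpl in *; try discriminate; [reflexivity|].
  rewrite IH; [reflexivity | lia].
Qed.

Lemma last_combine {A B : Type} (xs : list A) (ys : list B) (x : A) (y : B) :
  length xs = length ys -> last (combine xs ys) (x, y) = (last xs x, last ys y).
Proof.
  revert x ys y. induction xs as [|x' xs IH]; intros x [|y' ys] y H; simpl in H; try discriminate;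
    [reflexivity|].
  change (combine (x' :: xs) (y' :: ys)) with ((x', y') :: combine xs ys).
  rewrite !last_cons. apply IH. lia.
Qed.

Lemma map_flip_combine {A B : Type} (xs : list A) (ys : list B) :
  map (fun p => (snd p, fst p)) (combine xs ys) = combine ys xs.
Proof.
  revert ys. induction xs as [|x xs IH]; intros [|y ys]; simpl; try reflexivity; now rewrite IH.
Qed.

Lemma lsum_is_scal_r (n : nat) (f : list nat -> R) (s c : R) :
  lsum_is n f s -> lsum_is n (fun l => f l * c) (s * c).
Proof.
  revert f s. induction n as [|n IH]; intros f s H; inversion H; subst; [constructor|].
  apply (lsum_S n _ (fun a => g a * c)); [intro a; apply IH; auto|].
  apply is_series_Reals, is_seriesR_scal_r. now apply is_series_Reals.
Qed.

Lemma lsum_is_snoc (n : nat) (f h : list nat -> R) (s : R) :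
  (forall l, length l = n -> is_series (fun a => f (l ++ [a])) (h l)) ->
  lsum_is n h s -> lsum_is (S n) f s.
Proof.
  revert f h s. induction n as [|n IH]; intros f h s Hf Hh; inversion Hh; subst.
  - apply (lsum_S 0 f (fun a => f [a])); [intro; constructor|].
    apply is_series_Reals. exact (Hf [] eq_refl).
  - apply (lsum_S (S n) f g); [|assumption]. intro a.
    apply (IH _ (fun l => h (a :: l))); [|auto]. intros l Hl. apply (Hf (a :: l)). simpl. lia.
Qed.

Section MarkovianCoupling.

Variables (init : nat * nat -> R) (k : nat -> nat * nat -> nat * nat -> R).
Variables (init1 : nat -> R) (k1 : nat -> nat -> nat -> R).
Hypothesis init_fst : forall a, is_series (fun b => init (a, b)) (init1 a).
Hypothesis k_fst : forall t x y a, is_series (fun b => k t (x, y) (a, b)) (k1 t x a).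

Lemma path_law_marg1 : marg1 (path_law init k) (path_law init1 k1).
Proof.
  intros [|x xs]; [exact (lsum_O _)|].
  induction xs as [|a xs IH] using rev_ind.
  - apply (lsum_is_snoc 0 _ (fun _ => init1 x)).
    + intros [|y l] Hl; [|discriminate]. simpl.
      apply (is_seriesR_ext (fun b => init (x, b))); [intro; ring | apply init_fst].
    + change (path_law init1 k1 [x]) with (init1 x * 1). rewrite Rmult_1_r. exact (lsum_O _).
  - change (x :: xs ++ [a]) with ((x :: xs) ++ [a]).
    rewrite path_law_snoc, length_app, Nat.add_comm.
    apply (lsum_is_snoc _ _ (fun ys => path_law init k (combine (x :: xs) ys) * k1 (length xs) (last xs x) a)).
    + intros [|y ys] Hl; [discriminate|]. injection Hl as Hl.
      apply (is_seriesR_ext (fun b => path_law init k (combine (x :: xs) (y :: ys))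
                                      * k (length xs) (last xs x, last ys y) (a, b))).
      * intro b. rewrite (combine_snoc (x :: xs) (y :: ys)) by (simpl; lia). simpl combine.
        rewrite path_law_snoc, last_combine, length_combine, Hl, Nat.min_id by lia. reflexivity.
      * apply is_seriesR_scal_l, k_fst.
    + now apply lsum_is_scal_r.
Qed.

Lemma path_law_process_law :
  (forall p, 0 <= init p) -> (forall t p q, 0 <= k t p q) ->
  is_series init1 1 -> (forall t x, is_series (k1 t x) 1) ->
  is_process_law (path_law init k).
Proof.
  intros Hinit Hk Hinit1 Hk1. split; [|split; [reflexivity|]].
  { intro l. now apply path_law_ge0. }
  intros [|p l].
  - exists init1. split; [|now apply is_series_Reals].
    intro a. apply is_series_Reals.
    apply (is_seriesR_ext (fun b => init (a, b))); [intro; simpl; ring | apply init_fst].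
  - destruct (last l p) as [x y] eqn:Hlast.
    exists (fun a => path_law init k (p :: l) * k1 (length l) x a). split.
    + intro a. apply is_series_Reals.
      apply (is_seriesR_ext (fun b => path_law init k (p :: l) * k (length l) (x, y) (a, b))).
      * intro b. change (p :: l ++ [(a, b)]) with ((p :: l) ++ [(a, b)]).
        now rewrite path_law_snoc, Hlast.
      * apply is_seriesR_scal_l, k_fst.
    + apply is_series_Reals.
      pose proof (is_seriesR_scal_l (path_law init k (p :: l)) _ _ (Hk1 (length l) x)) as H.
      now rewrite Rmult_1_r in H.
Qed.

End MarkovianCoupling.

Lemma path_law_marg2 (init : nat * nat -> R) (k : nat -> nat * nat -> nat * nat -> R)
    (init2 : nat -> R) (k2 : nat -> nat -> nat -> R) :
  (forall b, is_series (fun a => init (a, b)) (init2 b)) ->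
  (forall t x y b, is_series (fun a => k t (x, y) (a, b)) (k2 t y b)) ->
  marg2 (path_law init k) (path_law init2 k2).
Proof.
  intros Hinit Hk ys.
  set (flip := fun p : nat * nat => (snd p, fst p)).
  replace (fun xs => path_law init k (combine xs ys))
    with (fun xs => path_law (fun p => init (flip p)) (fun t p q => k t (flip p) (flip q)) (combine ys xs)).
  - apply path_law_marg1; [apply Hinit | intros t x y a; apply Hk].
  - extensionality xs. rewrite <- path_law_map. unfold flip. now rewrite map_flip_combine.
Qed.

Lemma path_law_dominated (init : nat * nat -> R) (k : nat -> nat * nat -> nat * nat -> R) :
  (forall p, init p <> 0 -> fst p = snd p) ->
  (forall t p q, (fst p <= snd p)%nat -> k t p q <> 0 -> (fst q <= snd q)%nat) ->
  dominated (path_law init k).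
Proof.
  intros Hinit Hk [|p l] Hl; [split; constructor|].
  simpl in Hl. apply Rmult_neq_0_reg in Hl as [Hp Hw].
  pose proof (Hinit p Hp) as Hdiag. destruct p as [x y]. simpl in Hdiag. subst y.
  split; [|reflexivity]. constructor; [simpl; lia|].
  assert (Hle : (fst (x, x) <= snd (x, x))%nat) by (simpl; lia).
  revert Hw Hle. generalize 0%nat, (x, x).
  induction l as [|q l IH]; intros t p Hw Hle; [constructor|].
  simpl in Hw. apply Rmult_neq_0_reg in Hw as [Hq Hw].
  pose proof (Hk t p q Hle Hq). constructor; [assumption | exact (IH _ _ Hw H)].
Qed.

Definition diag_law (m : nat -> R) (p : nat * nat) : R :=
  if Nat.eqb (fst p) (snd p) then m (fst p) else 0.

Lemma is_series_diag_law_fst (m : nat -> R) (a : nat) :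
  is_series (fun b => diag_law m (a, b)) (m a).
Proof. exact (is_series_point a (m a)). Qed.

Lemma is_series_diag_law_snd (m : nat -> R) (b : nat) :
  is_series (fun a => diag_law m (a, b)) (m b).
Proof.
  apply (is_seriesR_ext (fun a => if Nat.eqb b a then m b else 0)); [|apply is_series_point].
  intro a. unfold diag_law. simpl. destruct (Nat.eqb_spec b a), (Nat.eqb_spec a b); congruence.
Qed.

(* From [(x, y)], the first coordinate receives [fst q - pred x] Poisson([a0])
   arrivals; the second receives the same arrivals plus independent Poisson([a1]) ones. *)
Definition coupling_kernel (a0 a1 : R) (p q : nat * nat) : R :=
  K a0 (fst p) (fst q) * shift (pred (snd p) + (fst q - pred (fst p))) (pois a1) (snd q).

Lemma coupling_kernel_ge0 (a0 a1 : R) (p q : nat * nat) :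
  0 <= a0 -> 0 <= a1 -> 0 <= coupling_kernel a0 a1 p q.
Proof.
  intros H0 H1. unfold coupling_kernel, shift. apply Rmult_le_pos; [now apply K_ge0|].
  destruct (Nat.leb _ _); [now apply pois_ge0 | lra].
Qed.

Lemma is_series_coupling_kernel_fst (a0 a1 : R) (x y u : nat) :
  is_series (fun v => coupling_kernel a0 a1 (x, y) (u, v)) (K a0 x u).
Proof.
  rewrite <- (Rmult_1_r (K a0 x u)).
  apply is_seriesR_scal_l, is_series_shift, is_series_pois.
Qed.

Lemma is_series_coupling_kernel_snd (a0 a1 : R) (x y v : nat) :
  is_series (fun u => coupling_kernel a0 a1 (x, y) (u, v)) (K (a0 + a1) y v).
Proof.
  set (f := fun n => pois a0 n * shift (pred y + n) (pois a1) v).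
  apply (is_seriesR_ext (shift (pred x) f)).
  { intro u. unfold coupling_kernel, K, f, shift. simpl. destruct (Nat.leb (pred x) u); ring. }
  apply is_series_shift. unfold K.
  destruct (Nat.leb_spec (pred y) v) as [Hle | Hlt].
  - rewrite <- pois_conv.
    replace (conv (pois a0) (pois a1) (v - pred y)) with (sum_f_R0 f (v - pred y)).
    + apply is_seriesR_finite. intros n Hn. unfold f, shift.
      destruct (Nat.leb_spec (pred y + n) v); [lia | ring].
    + apply sum_eq. intros i Hi. unfold f, shift.
      destruct (Nat.leb_spec (pred y + i) v); [now rewrite Nat.sub_add_distr | lia].
  - apply (is_seriesR_ext (fun _ => 0)).
    + intro n. unfold f, shift. destruct (Nat.leb_spec (pred y + n) v); [lia | ring].
    + exact (is_seriesR_finite (fun _ => 0) 0 (fun _ _ => eq_refl)).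
Qed.

Lemma coupling_kernel_monotone (a0 a1 : R) (p q : nat * nat) :
  (fst p <= snd p)%nat -> coupling_kernel a0 a1 p q <> 0 -> (fst q <= snd q)%nat.
Proof.
  unfold coupling_kernel, K, shift. intros Hp Hq.
  destruct (Nat.leb_spec (pred (fst p)) (fst q)); [|elim Hq; ring].
  destruct (Nat.leb_spec (pred (snd p) + (fst q - pred (fst p))) (snd q)); [lia | elim Hq; ring].
Qed.

Theorem mainTheorem4 (r : R) (mu0 : nat -> R)
  (hr : 0 < r < 1)
  (hpos : forall n, 0 <= mu0 n)
  (hprob : infinite_sum mu0 1)
  (hmean : infinite_sum (fun n => INR n * mu0 n) r) :
  (exists P : list (nat * nat) -> R,
      is_process_law P /\ marg1 P (fdd_eta mu0) /\ marg2 P (fdd_MD1 r mu0) /\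
      dominated P) /\
  ((exists l0 : R, 0 < l0 /\ exists s, infinite_sum (fun n => mu0 n * exp (l0 * INR n)) s) ->
   exists l : R, 0 < l /\ exists M : R, forall t : nat,
     exists s, infinite_sum (fun n => mu mu0 t n * exp (l * INR n)) s /\ s <= M).
Proof.
  assert (H0 : law_with_mean mu0 r) by (split; [|split]; try apply is_series_Reals; assumption).
  pose proof (fun t => rho_nl_bounds mu0 r t H0) as Hrho.
  split.
  - exists (path_law (diag_law mu0) (fun t => coupling_kernel (rho_nl mu0 t) (r - rho_nl mu0 t))).
    unfold fdd_eta, fdd_MD1. rewrite !fdd_path_law.
    split; [|split; [|split]].
    + apply (path_law_process_law _ _ mu0 (fun t => K (rho_nl mu0 t)));
        auto using is_series_diag_law_fst, is_series_coupling_kernel_fst, is_series_K, is_series_Reals.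
      * intros [a b]. unfold diag_law. simpl. destruct (Nat.eqb a b); [apply hpos | lra].
      * intros t p q. apply coupling_kernel_ge0; specialize (Hrho t); lra.
      * now apply is_series_Reals.
    + apply path_law_marg1; auto using is_series_diag_law_fst, is_series_coupling_kernel_fst.
    + apply path_law_marg2; [apply is_series_diag_law_snd|].
      intros t x y b.
      pose proof (is_series_coupling_kernel_snd (rho_nl mu0 t) (r - rho_nl mu0 t) x y b) as H.
      now rewrite Rplus_minus in H.
    + apply path_law_dominated; [|intros t; apply coupling_kernel_monotone].
      intros [a b]. unfold diag_law. simpl. destruct (Nat.eqb_spec a b); [auto | now intro].
  - intros [l0 [Hl0 [s0 Hs0]]].
    apply is_series_Reals in Hs0.
    destruct (mu_mgf_bounded mu0 r l0 s0 hr H0 Hl0 Hs0) as [l [Hl [M HM]]].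
    exists l. split; [exact Hl|]. exists M. intro t.
    destruct (HM t) as [s [Hs Hle]]. exists s. split; [now apply is_series_Reals | exact Hle].
Qed.
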